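(* Fix $\varepsilon\in(0,1]$. For every $\lambda\in(\varepsilon,\infty)$ with $(\lambda-\varepsilon)N>\lambda\varepsilon$, every $u\in(0,1)$ and every $m\in\mathbb N$, \[ \left|\frac{\lambda N^2}{2u(1-u)(N+\lambda)}\sum_{n=mN+1}^\infty\Big(\frac N{N+\lambda}\Big)^n\Big(\frac1NS_{\beta_u}\big(L_0^{n+1}(J)\big)-\frac1NS_{\beta_u}\big(L_0^n(J)\big)\Big)\right| \le\left[\Big(1+\frac\lambda N\Big)\Big(1-\frac\varepsilon N\Big)\right]^{-(mN+1)}\frac{C_\varepsilon\,\lambda(N-\varepsilon)}{(\lambda-\varepsilon)N-\lambda\varepsilon}, \] where $C_\varepsilon=\frac1\pi\left(2\varepsilon^{-1}+9+\pi+\frac{32\sqrt2}{(1-\cos1)^{1/2}}\right)\frac{4+\varepsilon}{\varepsilon}$.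
   Context: $E$ is a finite set with $N=\#E>8$ elements, listed in a fixed order; $\mathsf M_E$ is the space of complex $N\times N$ matrices indexed by $E\times E$. $Q$ is an irreducible stochastic matrix on $E$ with $Q(x,y)=Q(y,x)$ for all $x,y$ and $\mathrm{tr}(Q)=0$. $I$ is the identity and $J$ the matrix with all entries $1/N$. $L_0(C)=\frac{N-2}NC+\frac1N(CQ+QC)-\frac{2\,\mathrm{tr}(C)}{N^2}Q+\frac{2\,\mathrm{tr}(C)}{N^2}I$, and $L_0^n$ is its $n$-fold composition. For $u\in(0,1)$, $\beta_u$ is a random vector in $\{0,1\}^E$ with i.i.d. Bernoulli($u$) entries and $S_{\beta_u}(C)=\mathbb E\big[\sum_{x,y}\beta_u(x)C(x,y)\beta_u(y)\big]$. *)

From HB Require Import structures.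
From Stdlib Require Import Reals.
From mathcomp Require Import all_boot.

Set Implicit Arguments.
Unset Strict Implicit.
Unset Printing Implicit Defensive.

HB.instance Definition _ :=
  Monoid.isComLaw.Build R R0 Rplus (fun a b c => esym (Rplus_assoc a b c)) Rplus_comm Rplus_0_l.

Open Scope R_scope.

Section Defs.
Variable E : finType.

Definition mat := E -> E -> R.

Definition esum (f : E -> R) : R := \big[Rplus/0]_(x : E) f x.

Definition NR : R := INR #|E|.

Definition mmul (A B : mat) : mat := fun x y => esum (fun z => A x z * B z y).
Definition mtr (C : mat) : R := esum (fun x => C x x).
Definition Imx : mat := fun x y => if x == y then 1 else 0.
Definition Jmx : mat := fun _ _ => / NR.
Definition mpow (A : mat) (n : nat) : mat := Nat.iter n (mmul A) Imx.

Definition symmetric_mx (Q : mat) : Prop := forall x y, Q x y = Q y x.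
Definition stochastic_mx (Q : mat) : Prop :=
  (forall x y, 0 <= Q x y) /\ (forall x, esum (Q x) = 1).
Definition irreducible_mx (Q : mat) : Prop :=
  forall x y, exists n : nat, 0 < mpow Q n x y.

Definition L0 (Q : mat) (C : mat) : mat := fun x y =>
  (NR - 2) / NR * C x y + / NR * (mmul C Q x y + mmul Q C x y)
  - 2 * mtr C / NR ^ 2 * Q x y + 2 * mtr C / NR ^ 2 * Imx x y.

Definition L0n (Q : mat) (n : nat) (C : mat) : mat := Nat.iter n (L0 Q) C.

Definition bern_prob (u : R) (b : {ffun E -> bool}) : R :=
  \big[Rmult/1]_(x : E) (if b x then u else 1 - u).

Definition bit (b : {ffun E -> bool}) (x : E) : R := if b x then 1 else 0.

Definition S_beta (u : R) (C : mat) : R :=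
  \big[Rplus/0]_(b : {ffun E -> bool})
     (bern_prob u b * esum (fun x => esum (fun y => bit b x * C x y * bit b y))).

End Defs.

Definition C_eps (eps : R) : R :=
  / PI * (2 / eps + 9 + PI + 32 * sqrt 2 / sqrt (1 - cos 1)) * ((4 + eps) / eps).

(* Write C_n := L0^n(J).  As Q is symmetric and stochastic, every C_n commutes
   with Q, L0 preserves the total mass sum_{x,y} C(x,y) and raises the trace by
   (2/N) tr(C Q); since S_beta(C) = u^2 sum_{x,y} C(x,y) + u(1-u) tr C, the n-th
   increment of the series is 2u(1-u)/N^2 * tr(C_n Q).
   This number lies in [0,1].  With the lazy walk P := (1-2/N) I + (2/N) Q, the
   defect Z_n := (tr C_n / N) I + J - C_n obeys Z_{n+1} = Z_n P + (2 tr(C_n Q)/N^2) I,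
   which preserves both the entrywise nonnegativity of Z_n and the inequalities
   tr((I-Q) Z_n P^j) >= 0 for all j, because (I-Q) P^j is a nonnegative
   combination of positive semidefinite matrices.  Then tr(C_n Q) = tr((I-Q) Z_n)
   >= 0 and 1 - tr(C_n Q) = tr(Q Z_n) >= 0.
   Hence the series is dominated by a geometric one whose value, times the
   prefactor, is exactly (N/(N+lam))^(mN+1) <= [(1+lam/N)(1-eps/N)]^-(mN+1), and
   the remaining factor C_eps lam (N-eps) / ((lam-eps)N - lam eps) is at least 1. *)

From HB Require Import structures.
From Stdlib Require Import Reals Lra FunctionalExtensionality.
From mathcomp Require Import all_boot.

Set Implicit Arguments.
Unset Strict Implicit.
Unset Printing Implicit Defensive.
Open Scope R_scope.

HB.instance Definition _ :=
  Monoid.isComLaw.Build R R1 Rmult (fun a b c => esym (Rmult_assoc a b c)) Rmult_comm Rmult_1_l.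
HB.instance Definition _ := Monoid.isMulLaw.Build R R0 Rmult Rmult_0_l Rmult_0_r.
HB.instance Definition _ := Monoid.isAddLaw.Build R Rmult Rplus Rmult_plus_distr_r Rmult_plus_distr_l.

Section Sums.
Variable E : finType.
Implicit Types f g : E -> R.

Lemma eq_esum f g : (forall x, f x = g x) -> esum f = esum g.
Proof. by move=> h; apply: eq_bigr => x _; exact: h. Qed.

Lemma esumD f g : esum (fun x => f x + g x) = esum f + esum g.
Proof. exact: big_split. Qed.

Lemma esumZ (c : R) f : esum (fun x => c * f x) = c * esum f.
Proof. by rewrite /esum (big_distrr (times:=Rmult) (plus:=Rplus)). Qed.

Lemma esumZr (c : R) f : esum (fun x => f x * c) = esum f * c.
Proof. by rewrite Rmult_comm -esumZ; apply: eq_esum => x; ring. Qed.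

Lemma esumB f g : esum (fun x => f x - g x) = esum f - esum g.
Proof.
rewrite (eq_esum (g := fun x => f x + -1 * g x)) => [|x]; last ring.
by rewrite esumD esumZ; ring.
Qed.

Lemma exchange_esum (F : E -> E -> R) :
  esum (fun x => esum (fun y => F x y)) = esum (fun y => esum (fun x => F x y)).
Proof. exact: exchange_big. Qed.

Lemma esum_const (c : R) : esum (fun _ : E => c) = NR E * c.
Proof.
rewrite /esum /NR big_const; elim: #|E| => [|n IH] /=; first ring.
by rewrite IH; case: n {IH} => /= *; ring.
Qed.

Lemma ler_esum f g : (forall x, f x <= g x) -> esum f <= esum g.
Proof. by move=> h; apply: (big_ind2 (fun a b => a <= b)) => *; [lra | lra | exact: h]. Qed.

Lemma esum_ge0 f : (forall x, 0 <= f x) -> 0 <= esum f.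
Proof.
move=> h; apply: (Rle_trans _ (esum (fun _ => 0))); last exact: ler_esum.
by rewrite esum_const Rmult_0_r; right.
Qed.

Lemma esum_Imx (x : E) f : esum (fun y => Imx x y * f y) = f x.
Proof.
rewrite /esum (bigD1 x) //= big1 => [|y /negbTE hy]; first by rewrite /Imx eqxx; ring.
by rewrite /Imx eq_sym hy; ring.
Qed.

Lemma esum_Imx_r (x : E) f : esum (fun y => Imx y x * f y) = f x.
Proof. by rewrite -(esum_Imx x); apply: eq_esum => y; rewrite /Imx eq_sym. Qed.

End Sums.

Section Matrices.
Variable E : finType.
Implicit Types A B C M : mat E.

Definition madd A B : mat E := fun x y => A x y + B x y.
Definition mscale (c : R) A : mat E := fun x y => c * A x y.
Definition msum A : R := esum (fun x => esum (A x)).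

Lemma mat_ext A B : (forall x y, A x y = B x y) -> A = B.
Proof. by move=> h; do 2![apply: functional_extensionality => ?]; exact: h. Qed.

Lemma mmulA A B C : mmul (mmul A B) C = mmul A (mmul B C).
Proof.
apply: mat_ext => x y; rewrite /mmul.
under eq_esum => z do rewrite -esumZr.
rewrite exchange_esum; apply: eq_esum => w; rewrite -esumZ.
by apply: eq_esum => z; ring.
Qed.

Lemma mmulDl A B C : mmul (madd A B) C = madd (mmul A C) (mmul B C).
Proof. by apply: mat_ext => x y; rewrite /mmul /madd -esumD; apply: eq_esum => z; ring. Qed.

Lemma mmulDr A B C : mmul C (madd A B) = madd (mmul C A) (mmul C B).
Proof. by apply: mat_ext => x y; rewrite /mmul /madd -esumD; apply: eq_esum => z; ring. Qed.

Lemma mmulZl c A B : mmul (mscale c A) B = mscale c (mmul A B).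
Proof. by apply: mat_ext => x y; rewrite /mmul /mscale -esumZ; apply: eq_esum => z; ring. Qed.

Lemma mmulZr c A B : mmul A (mscale c B) = mscale c (mmul A B).
Proof. by apply: mat_ext => x y; rewrite /mmul /mscale -esumZ; apply: eq_esum => z; ring. Qed.

Lemma mmul1l A : mmul (@Imx E) A = A.
Proof. by apply: mat_ext => x y; rewrite /mmul esum_Imx. Qed.

Lemma mmul1r A : mmul A (@Imx E) = A.
Proof.
apply: mat_ext => x y; rewrite /mmul -[RHS](esum_Imx_r y (A x)).
by apply: eq_esum => z; ring.
Qed.

Lemma mtrD A B : mtr (madd A B) = mtr A + mtr B.
Proof. exact: esumD. Qed.

Lemma mtrZ c A : mtr (mscale c A) = c * mtr A.
Proof. exact: esumZ. Qed.

Lemma mtrC A B : mtr (mmul A B) = mtr (mmul B A).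
Proof. by rewrite /mtr /mmul exchange_esum; apply: eq_esum => x; apply: eq_esum => y; ring. Qed.

Lemma mtr1 : mtr (@Imx E) = NR E.
Proof. by rewrite /mtr (eq_esum (g := fun _ => 1)) ?esum_const => [|x]; rewrite ?/Imx ?eqxx; ring. Qed.

Lemma msumD A B : msum (madd A B) = msum A + msum B.
Proof. by rewrite /msum -esumD; apply: eq_esum => x; rewrite -esumD. Qed.

Lemma msumZ c A : msum (mscale c A) = c * msum A.
Proof. by rewrite /msum -esumZ; apply: eq_esum => x; rewrite -esumZ. Qed.

Lemma mpowD A m n : mpow A (m + n) = mmul (mpow A m) (mpow A n).
Proof. by elim: m => [|m IH] /=; rewrite ?mmul1l // IH mmulA. Qed.

Lemma mpowSr A n : mpow A n.+1 = mmul (mpow A n) A.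
Proof. by rewrite -addn1 mpowD /= mmul1r. Qed.

Lemma mpow_sym A : symmetric_mx A -> forall n, symmetric_mx (mpow A n).
Proof.
move=> hA; elim=> [|n IH] x y; first by rewrite /= /Imx eq_sym.
by rewrite {2}mpowSr /= /mmul; apply: eq_esum => z; rewrite hA IH; ring.
Qed.

Definition qform A (v : E -> R) : R := esum (fun y => esum (fun z => v y * A y z * v z)).
Definition sqnorm (v : E -> R) : R := esum (fun y => v y * v y).

Lemma qformD A B v : qform (madd A B) v = qform A v + qform B v.
Proof. by rewrite /qform -esumD; apply: eq_esum => y; rewrite -esumD; apply: eq_esum => z; rewrite /madd; ring. Qed.

Lemma qformZ c A v : qform (mscale c A) v = c * qform A v.
Proof. by rewrite /qform -esumZ; apply: eq_esum => y; rewrite -esumZ; apply: eq_esum => z; rewrite /mscale; ring. Qed.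

Lemma qform1 v : qform (@Imx E) v = sqnorm v.
Proof.
rewrite /qform; apply: eq_esum => y; rewrite -[RHS](esum_Imx y (fun z => v y * v z)).
by apply: eq_esum => z; ring.
Qed.

Lemma mtr_mul_square A M : symmetric_mx M ->
  mtr (mmul A (mmul M M)) = esum (fun x => qform A (M x)).
Proof.
move=> hM; rewrite /mtr /mmul /qform [RHS]exchange_esum; apply: eq_esum => y.
under eq_esum => z do rewrite -esumZ.
rewrite exchange_esum; apply: eq_esum => x; apply: eq_esum => z.
by rewrite (hM z x); ring.
Qed.

End Matrices.

Section Bernoulli.
Variables (E : finType) (u : R).

Lemma prod_indicator (x : E) (t : E -> bool) :
  \big[Rmult/1]_(z : E) (if z == x then (if t z then 1 else 0) else 1)
  = if t x then 1 else 0.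
Proof. by rewrite (bigD1 x) //= eqxx big1 => [|z /negbTE ->] //; ring. Qed.

Lemma bern_moment2 (x y : E) :
  \big[Rplus/0]_(b : {ffun E -> bool}) (bern_prob u b * (bit b x * bit b y))
  = if x == y then u else u * u.
Proof.
(* Write the summand as a product over [E] and expand it with [bigA_distr_bigA]. *)
pose w (z : E) (t : bool) := (if t then u else 1 - u) *
  ((if z == x then (if t then 1 else 0) else 1) * (if z == y then (if t then 1 else 0) else 1)).
rewrite (eq_bigr (fun b : {ffun E -> bool} => \big[Rmult/1]_(z : E) w z (b z))); last first.
  by move=> b _; rewrite /w big_split /= big_split /= !prod_indicator.
rewrite -(bigA_distr_bigA (times := Rmult) (plus := Rplus)).
rewrite (eq_bigr (fun z => if (z == x) || (z == y) then u else 1)); last first.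
  by move=> z _; rewrite big_bool /w /=; case: (z == x); case: (z == y) => /=; ring.
rewrite (bigD1 x) //= eqxx /=; case: eqP => [<-|/eqP hxy].
  by rewrite big1 => [|z /negbTE ->] //; ring.
rewrite (bigD1 y) /=; last by rewrite eq_sym.
by rewrite eqxx orbT big1 => [|z /andP [/negbTE -> /negbTE ->]] //; ring.
Qed.

Lemma S_betaE (C : mat E) : S_beta u C = u * u * msum C + (u - u * u) * mtr C.
Proof.
rewrite /S_beta (eq_bigr (fun b : {ffun E -> bool} => esum (fun x => esum (fun y =>
           C x y * (bern_prob u b * (bit b x * bit b y)))))); last first.
  move=> b _; rewrite -esumZ; apply: eq_esum => x; rewrite -esumZ.
  by apply: eq_esum => y; ring.
rewrite exchange_big /msum /mtr -esumZ -esumZ -esumD; apply: eq_esum => x /=.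
rewrite exchange_big -(esum_Imx x (C x)) -esumZ -esumZ -esumD; apply: eq_esum => y /=.
rewrite -(big_distrr (times := Rmult) (plus := Rplus)) /= bern_moment2 /Imx.
by case: eqP => [->|_]; ring.
Qed.

End Bernoulli.

Section LazyWalk.
Variables (E : finType) (Q : mat E).
Hypotheses (hstoch : stochastic_mx Q) (hsym : symmetric_mx Q).

Definition laplacian : mat E := madd (@Imx E) (mscale (-1) Q).
Definition lazy_walk : mat E :=
  madd (mscale ((NR E - 2) / NR E) (@Imx E)) (mscale (2 / NR E) Q).

Lemma stochastic_colsum y : esum (fun x => Q x y) = 1.
Proof. by case: hstoch => _ hs; rewrite -(hs y); apply: eq_esum => x. Qed.

Lemma qform_le_sqnorm v : qform Q v <= sqnorm v.
Proof.
case: hstoch => hpos hs.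
(* [v y v z <= (v y^2 + v z^2) / 2], then sum the rows and the columns of [Q]. *)
apply: (Rle_trans _ (esum (fun y => esum (fun z => Q y z * (v y * v y + v z * v z) / 2)))).
  apply: ler_esum => y; apply: ler_esum => z.
  by have := hpos y z; have := pow2_ge_0 (v y - v z); nra.
rewrite (eq_esum (g := fun y => v y * v y / 2 * esum (Q y)
                                + esum (fun z => v z * v z / 2 * Q y z))); last first.
  by move=> y; rewrite -esumZ -esumD; apply: eq_esum => z; field.
rewrite esumD exchange_esum -esumD; right; apply: eq_esum => y.
by rewrite hs esumZ stochastic_colsum; field.
Qed.

Lemma sqnorm_mul_le v : sqnorm (fun w => esum (fun z => Q w z * v z)) <= sqnorm v.
Proof.
case: hstoch => hpos hs.
(* Jensen: each row of [Q] is a probability vector. *)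
apply: (Rle_trans _ (esum (fun w => esum (fun z => Q w z * (v z * v z))))).
  apply: ler_esum => w; set m := esum (fun z => Q w z * v z).
  have hvar : 0 <= esum (fun z => Q w z * ((v z - m) * (v z - m))).
    by apply: esum_ge0 => z; have := hpos w z; have := pow2_ge_0 (v z - m); nra.
  have : esum (fun z => Q w z * ((v z - m) * (v z - m))) =
         esum (fun z => Q w z * (v z * v z)) - esum (fun z => 2 * m * (Q w z * v z))
         + esum (fun z => m * m * Q w z).
    by rewrite -esumB -esumD; apply: eq_esum => z; ring.
  by rewrite !esumZ hs -/m; nra.
rewrite exchange_esum; right; apply: eq_esum => z.
by rewrite esumZr stochastic_colsum; ring.
Qed.

Lemma qform_mul_self v :
  qform (mmul Q Q) v = sqnorm (fun w => esum (fun z => Q w z * v z)).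
Proof.
rewrite /qform /mmul /sqnorm.
rewrite (eq_esum (g := fun y => esum (fun w => esum (fun z => v y * Q y w * (Q w z * v z))))).
  rewrite exchange_esum; apply: eq_esum => w.
  under eq_esum => y do rewrite esumZ (hsym y w).
  by rewrite esumZr; congr (_ * _); apply: eq_esum => y; ring.
move=> y; rewrite [RHS]exchange_esum; apply: eq_esum => z.
by rewrite -esumZ -esumZr; apply: eq_esum => w; ring.
Qed.

Lemma laplacian_mul_walk :
  mmul laplacian lazy_walk =
  madd (mscale ((NR E - 4) / NR E) laplacian)
       (mscale (2 / NR E) (madd (@Imx E) (mscale (-1) (mmul Q Q)))).
Proof.
rewrite /laplacian /lazy_walk !(mmulDl, mmulDr, mmulZl, mmulZr, mmul1l, mmul1r).
by apply: mat_ext => x y; rewrite /madd /mscale /Rdiv; ring.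
Qed.

Hypothesis hN : 4 <= NR E.

Lemma qform_laplacian_ge0 v : 0 <= qform laplacian v.
Proof. by rewrite qformD qformZ qform1; have := qform_le_sqnorm v; lra. Qed.

Lemma qform_laplacian_walk_ge0 v : 0 <= qform (mmul laplacian lazy_walk) v.
Proof.
rewrite laplacian_mul_walk qformD !qformZ qformD qformZ qform1 qform_mul_self.
have h1 : 0 <= (NR E - 4) / NR E by apply: Rle_mult_inv_pos; lra.
have h2 : 0 <= 2 / NR E by apply: Rle_mult_inv_pos; lra.
have := qform_laplacian_ge0 v; have := sqnorm_mul_le v; nra.
Qed.

Lemma lazy_walk_sym : symmetric_mx lazy_walk.
Proof. by move=> x y; rewrite /lazy_walk /madd /mscale hsym /Imx eq_sym. Qed.

Lemma lazy_walk_ge0 x y : 0 <= lazy_walk x y.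
Proof.
case: hstoch => hpos _; rewrite /lazy_walk /madd /mscale.
have h1 : 0 <= (NR E - 2) / NR E by apply: Rle_mult_inv_pos; lra.
have h2 : 0 <= 2 / NR E by apply: Rle_mult_inv_pos; lra.
have h3 : 0 <= Imx x y by rewrite /Imx; case: eqP => _; lra.
by have := hpos x y; nra.
Qed.

Lemma mtr_laplacian_walk_ge0 j : 0 <= mtr (mmul laplacian (mpow lazy_walk j)).
Proof.
(* [P^j] is [M M] or [P M M] with [M := P^(j/2)] symmetric, so the trace is a
   sum of quadratic forms. *)
have hM := mpow_sym lazy_walk_sym j./2.
rewrite -(odd_double_half j) -addnn.
case: (odd j) => /=; rewrite ?add0n mpowD.
- rewrite -mmulA mtr_mul_square //; apply: esum_ge0 => x; exact: qform_laplacian_walk_ge0.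
- rewrite mtr_mul_square //; apply: esum_ge0 => x; exact: qform_laplacian_ge0.
Qed.

End LazyWalk.

Section Iterates.
Variables (E : finType) (Q : mat E).
Hypotheses (hstoch : stochastic_mx Q) (hsym : symmetric_mx Q) (htr : mtr Q = 0).
Hypothesis hN : 4 <= NR E.

Let hN0 : NR E <> 0. Proof. lra. Qed.

Definition L0J n : mat E := L0n Q n (@Jmx E).

Lemma L0_expand C :
  L0 Q C = madd (madd (madd (mscale ((NR E - 2) / NR E) C)
             (mscale (/ NR E) (madd (mmul C Q) (mmul Q C))))
             (mscale (- (2 * mtr C / NR E ^ 2)) Q))
             (mscale (2 * mtr C / NR E ^ 2) (@Imx E)).
Proof. by apply: mat_ext => x y; rewrite /L0 /madd /mscale; ring. Qed.

Lemma L0_commute C : mmul C Q = mmul Q C -> mmul (L0 Q C) Q = mmul Q (L0 Q C).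
Proof.
move=> hC; rewrite L0_expand !(mmulDl, mmulDr, mmulZl, mmulZr, mmul1l, mmul1r).
by rewrite hC !mmulA hC.
Qed.

Lemma mmulJ_stochastic : mmul (@Jmx E) Q = @Jmx E /\ mmul Q (@Jmx E) = @Jmx E.
Proof.
case: hstoch => _ hs; split; apply: mat_ext => x y; rewrite /mmul /Jmx.
- by rewrite esumZ stochastic_colsum //; ring.
- by rewrite esumZr hs; ring.
Qed.

Lemma L0J_commute n : mmul (L0J n) Q = mmul Q (L0J n).
Proof.
elim: n => [|n IH] /=; last exact: L0_commute.
by case: mmulJ_stochastic => -> ->.
Qed.

Lemma mtr_L0 C : mtr (L0 Q C) = mtr C + 2 / NR E * mtr (mmul C Q).
Proof. by rewrite L0_expand !(mtrD, mtrZ) (mtrC Q C) htr mtr1; field. Qed.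

Lemma msum_L0 C : msum (L0 Q C) = msum C.
Proof.
case: hstoch => _ hs.
have hCQ : msum (mmul C Q) = msum C.
  rewrite /msum /mmul; apply: eq_esum => x; rewrite exchange_esum.
  by apply: eq_esum => z; rewrite esumZ hs; ring.
have hQC : msum (mmul Q C) = msum C.
  rewrite /msum /mmul exchange_esum.
  under eq_esum => y do rewrite exchange_esum.
  rewrite exchange_esum; apply: eq_esum => z; apply: eq_esum => y.
  by rewrite esumZr stochastic_colsum //; ring.
have hQ : msum Q = NR E by rewrite /msum (eq_esum (g := fun _ => 1)) ?esum_const //; ring.
have h1 : msum (@Imx E) = NR E.
  rewrite /msum (eq_esum (g := fun _ => 1)) ?esum_const => [|x]; first ring.
  by rewrite -[RHS](esum_Imx x (fun _ => 1)); apply: eq_esum => y; ring.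
by rewrite L0_expand !(msumD, msumZ) hCQ hQC hQ h1; field.
Qed.

Lemma mtrJ : mtr (@Jmx E) = 1.
Proof. by rewrite /mtr /Jmx esum_const; field. Qed.

Definition trQ_L0J n : R := mtr (mmul (L0J n) Q).

Definition defect n : mat E :=
  madd (madd (mscale (mtr (L0J n) / NR E) (@Imx E)) (mscale (-1) (L0J n))) (@Jmx E).

Lemma mmulJ_walk : mmul (@Jmx E) (lazy_walk Q) = @Jmx E.
Proof.
case: mmulJ_stochastic => hJQ _.
rewrite /lazy_walk mmulDr !mmulZr mmul1r hJQ.
by apply: mat_ext => x y; rewrite /madd /mscale; field.
Qed.

Lemma defect_succ n :
  defect n.+1 = madd (mmul (defect n) (lazy_walk Q))
                     (mscale (2 * trQ_L0J n / NR E ^ 2) (@Imx E)).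
Proof.
have hC := L0J_commute n; rewrite /defect /trQ_L0J.
have -> : L0J n.+1 = L0 Q (L0J n) by [].
rewrite mtr_L0 !(mmulDl, mmulZl) mmul1l mmulJ_walk.
rewrite [lazy_walk Q]/lazy_walk mmulDr !mmulZr mmul1r.
set C := L0J n; rewrite -/C in hC.
by apply: mat_ext => x y; rewrite /madd /mscale /L0 -hC /Jmx; field.
Qed.

Definition admissible (Z : mat E) : Prop :=
  (forall x y, 0 <= Z x y) /\
  forall j, 0 <= mtr (mmul (mmul (laplacian Q) Z) (mpow (lazy_walk Q) j)).

Lemma admissible_defect0 : admissible (defect 0).
Proof.
have hinv : 0 <= / NR E by left; apply: Rinv_0_lt_compat; lra.
have -> : defect 0 = mscale (/ NR E) (@Imx E).
  by apply: mat_ext => x y; rewrite /defect /= mtrJ /madd /mscale /Jmx; field.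
split=> [x y | j].
- by rewrite /mscale /Imx; apply: Rmult_le_pos => //; case: eqP => _; lra.
- rewrite mmulZr mmul1r mmulZl mtrZ; apply: Rmult_le_pos => //.
  exact: mtr_laplacian_walk_ge0.
Qed.

Lemma admissible_step Z c : admissible Z -> 0 <= c ->
  admissible (madd (mmul Z (lazy_walk Q)) (mscale c (@Imx E))).
Proof.
move=> [hZ hT] hc; split=> [x y | j].
- rewrite /madd /mscale /mmul.
  have h1 : 0 <= Imx x y by rewrite /Imx; case: eqP => _; lra.
  have : 0 <= esum (fun z => Z x z * lazy_walk Q z y).
    by apply: esum_ge0 => z; apply: Rmult_le_pos; [exact: hZ | exact: lazy_walk_ge0].
  nra.
- rewrite mmulDr mmulZr mmul1r mmulDl mmulZl mtrD mtrZ -mmulA mmulA.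
  have := hT j.+1; have := mtr_laplacian_walk_ge0 hstoch hsym hN j; rewrite /=; nra.
Qed.

Lemma mtr_Q_defect n : mtr (mmul Q (defect n)) = 1 - trQ_L0J n.
Proof.
case: mmulJ_stochastic => _ hQJ.
rewrite /defect !mmulDr !mmulZr mmul1r hQJ !(mtrD, mtrZ) htr (mtrC Q) mtrJ.
by rewrite /trQ_L0J; ring.
Qed.

Lemma mtr_laplacian_defect n : mtr (mmul (laplacian Q) (defect n)) = trQ_L0J n.
Proof.
rewrite /laplacian mmulDl mmulZl mmul1l mtrD mtrZ mtr_Q_defect.
by rewrite /defect !(mtrD, mtrZ) mtr1 mtrJ; field.
Qed.

Lemma trQ_L0J_bounds_of_admissible n : admissible (defect n) -> 0 <= trQ_L0J n <= 1.
Proof.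
case=> hZ hT; split.
- by have := hT 0%N; rewrite /= mmul1r mtr_laplacian_defect.
- have : 0 <= mtr (mmul Q (defect n)).
    case: hstoch => hpos _.
    by apply: esum_ge0 => x; apply: esum_ge0 => z; apply: Rmult_le_pos.
  by rewrite mtr_Q_defect; lra.
Qed.

Lemma admissible_defect n : admissible (defect n).
Proof.
elim: n => [|n IH]; first exact: admissible_defect0.
rewrite defect_succ; apply: admissible_step => //.
have [hd _] := trQ_L0J_bounds_of_admissible IH.
by apply: Rle_mult_inv_pos; [lra | apply: pow_lt; lra].
Qed.

Lemma trQ_L0J_bounds n : 0 <= trQ_L0J n <= 1.
Proof. exact: trQ_L0J_bounds_of_admissible (admissible_defect n). Qed.

Lemma S_beta_increment u n :
  / NR E * S_beta u (L0n Q n.+1 (@Jmx E)) - / NR E * S_beta u (L0n Q n (@Jmx E))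
  = 2 * u * (1 - u) / NR E ^ 2 * trQ_L0J n.
Proof.
have -> : L0n Q n.+1 (@Jmx E) = L0 Q (L0J n) by [].
by rewrite -/(L0J n) !S_betaE msum_L0 mtr_L0 /trQ_L0J; field.
Qed.

End Iterates.

Lemma geometric_dominated_sum (t : nat -> R) (a r : R) :
  0 <= r < 1 -> (forall k, 0 <= t k <= a * r ^ k) ->
  exists l, infinite_sum t l /\ 0 <= l <= a / (1 - r).
Proof.
move=> hr ht.
have hpart n : sum_f_R0 t n <= a / (1 - r).
  apply: (Rle_trans _ (sum_f_R0 (fun k => r ^ k * a) n)).
    by apply: sum_growing => k; rewrite Rmult_comm; case: (ht k).
  rewrite -scal_sum tech3; last lra.
  have ha : 0 <= a by case: (ht 0%N); rewrite /= Rmult_1_r; lra.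
  have : 0 <= r ^ n.+1 by apply: pow_le; lra.
  have : 0 < 1 - r by lra.
  move=> h1 h2; rewrite /Rdiv -Rmult_assoc.
  apply: Rmult_le_compat_r; first by left; apply: Rinv_0_lt_compat.
  nra.
have hgrow : Un_growing (sum_f_R0 t) by move=> n /=; case: (ht n.+1); lra.
have hub : has_ub (sum_f_R0 t) by exists (a / (1 - r)) => _ [n ->]; exact: hpart.
have [l hl] := growing_cv _ hgrow hub.
exists l; split; first exact: hl.
split; first by have := growing_ineq _ _ hgrow hl 0; case: (ht 0%N) => /=; lra.
apply: Rle_cv_lim hpart hl _ => e he.
by exists 0%N => n _; rewrite /Rdist Rminus_diag Rabs_R0.
Qed.

Lemma cos1_lt1 : cos 1 < 1.
Proof.
have hpi := PI2_3_2.
by rewrite -[X in _ < X]cos_0; apply: cos_decreasing_1; lra.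
Qed.

Lemma C_eps_ge1 eps : 0 < eps <= 1 -> 1 <= C_eps eps.
Proof.
move=> heps; rewrite /C_eps.
have hpi := PI_RGT_0.
have hsq : 0 <= 32 * sqrt 2 / sqrt (1 - cos 1).
  apply: Rle_mult_inv_pos; first by have := sqrt_pos 2; lra.
  by apply: sqrt_lt_R0; have := cos1_lt1; lra.
have h2 : 0 <= 2 / eps by apply: Rle_mult_inv_pos; lra.
have hA : 1 <= / PI * (2 / eps + 9 + PI + 32 * sqrt 2 / sqrt (1 - cos 1)).
  rewrite -[X in X <= _](Rinv_l PI); last lra.
  by apply: Rmult_le_compat_l; [left; apply: Rinv_0_lt_compat | lra].
have hB : 1 <= (4 + eps) / eps.
  have -> : (4 + eps) / eps = 4 / eps + 1 by field; lra.
  have : 0 <= 4 / eps by apply: Rle_mult_inv_pos; lra.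
  lra.
nra.
Qed.

Lemma C_eps_ratio_ge1 eps lam n : 0 < eps <= 1 -> 0 <= n ->
  0 < (lam - eps) * n - lam * eps ->
  1 <= C_eps eps * lam * (n - eps) / ((lam - eps) * n - lam * eps).
Proof.
move=> heps hn hD; have hC := C_eps_ge1 heps.
have hratio : 1 <= lam * (n - eps) / ((lam - eps) * n - lam * eps).
  apply: (Rmult_le_reg_r ((lam - eps) * n - lam * eps)) => //.
  by rewrite /Rdiv Rmult_assoc Rinv_l; nra.
have -> : C_eps eps * lam * (n - eps) / ((lam - eps) * n - lam * eps)
    = C_eps eps * (lam * (n - eps) / ((lam - eps) * n - lam * eps)) by field; lra.
nra.
Qed.

Lemma discount_pow_le lam eps n k : 0 < lam -> 0 <= eps < n ->
  (n / (n + lam)) ^ k <= / ((1 + lam / n) * (1 - eps / n)) ^ k.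
Proof.
move=> hlam heps; have hn : 0 < n by lra.
have hb1 : 0 < 1 + lam / n by have := Rdiv_lt_0_compat _ _ hlam hn; lra.
have hb2 : 0 < 1 - eps / n.
  suff : eps / n < 1 by lra.
  by apply: (Rmult_lt_reg_r n); [lra | rewrite /Rdiv Rmult_assoc Rinv_l; lra].
have hb3 : 0 <= eps / n by apply: Rle_mult_inv_pos; lra.
rewrite -pow_inv; apply: pow_incr; split.
  by apply: Rle_mult_inv_pos; lra.
have -> : n / (n + lam) = / (1 + lam / n) by field; lra.
by apply: Rinv_le_contravar; [apply: Rmult_lt_0_compat | nra].
Qed.

Lemma discounted_tail_estimate (n lam eps u l : R) (k : nat) :
  0 < eps <= 1 -> eps < lam -> eps < n -> (lam - eps) * n > lam * eps -> 0 < u < 1 ->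
  0 <= l <= 2 * u * (1 - u) / n ^ 2 * (n / (n + lam)) ^ k / (1 - n / (n + lam)) ->
  Rabs (lam * n ^ 2 / (2 * u * (1 - u) * (n + lam)) * l)
  <= / ((1 + lam / n) * (1 - eps / n)) ^ k
     * (C_eps eps * lam * (n - eps) / ((lam - eps) * n - lam * eps)).
Proof.
move=> heps hlam hn hlamN hu [hl0 hlK].
have hu2 : 0 < 2 * u * (1 - u) by nra.
have hpref : 0 <= lam * n ^ 2 / (2 * u * (1 - u) * (n + lam)).
  by apply: Rle_mult_inv_pos; [apply: Rmult_le_pos; [lra | apply: pow_le; lra] | nra].
have hsum : lam * n ^ 2 / (2 * u * (1 - u) * (n + lam))
            * (2 * u * (1 - u) / n ^ 2 * (n / (n + lam)) ^ k / (1 - n / (n + lam)))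
            = (n / (n + lam)) ^ k.
  by field; repeat split; lra.
have hdisc : (n / (n + lam)) ^ k <= / ((1 + lam / n) * (1 - eps / n)) ^ k.
  by apply: discount_pow_le; lra.
have hK : 1 <= C_eps eps * lam * (n - eps) / ((lam - eps) * n - lam * eps).
  by apply: C_eps_ratio_ge1; lra.
have hinv : 0 <= / ((1 + lam / n) * (1 - eps / n)) ^ k.
  by apply: Rle_trans hdisc; apply: pow_le; apply: Rle_mult_inv_pos; lra.
rewrite Rabs_pos_eq; last exact: Rmult_le_pos.
rewrite -hsum in hdisc.
by have := Rmult_le_compat_l _ _ _ hpref hlK; nra.
Qed.

Theorem lemma4p6 (E : finType) (Q : mat E)
  (hN : (8 < #|E|)%N)
  (hstoch : stochastic_mx Q) (hirr : irreducible_mx Q)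
  (hsym : symmetric_mx Q) (htr : mtr Q = 0)
  (eps : R) (heps : 0 < eps <= 1)
  (lam : R) (hlam : eps < lam) (hlamN : (lam - eps) * NR E > lam * eps)
  (u : R) (hu : 0 < u < 1) (m : nat) :
  exists l : R,
    infinite_sum
      (fun k : nat =>
         let n := (m * #|E| + 1 + k)%nat in
         (NR E / (NR E + lam)) ^ n *
         (/ NR E * S_beta u (L0n Q (n + 1) (@Jmx E))
          - / NR E * S_beta u (L0n Q n (@Jmx E)))) l /\
    Rabs (lam * NR E ^ 2 / (2 * u * (1 - u) * (NR E + lam)) * l)
    <= / (((1 + lam / NR E) * (1 - eps / NR E)) ^ (m * #|E| + 1))
       * (C_eps eps * lam * (NR E - eps) / ((lam - eps) * NR E - lam * eps)).
Proof.
have hN4 : 4 <= NR E.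
  by rewrite /NR (_ : 4 = INR 4); [apply: le_INR; apply/leP; apply: leq_trans hN | simpl; ring].
pose c := 2 * u * (1 - u) / NR E ^ 2.
pose r := NR E / (NR E + lam).
pose n0 := (m * #|E| + 1)%N.
have hr : 0 <= r < 1.
  split; first by apply: Rle_mult_inv_pos; lra.
  by apply: (Rmult_lt_reg_r (NR E + lam)); [lra | rewrite /r /Rdiv Rmult_assoc Rinv_l; lra].
match goal with |- exists l, infinite_sum ?f l /\ _ => set t := f end.
have ht k : 0 <= t k <= c * r ^ n0 * r ^ k.
  rewrite Rmult_assoc -pow_add plusE /t /= -/n0 addn1.
  rewrite (S_beta_increment hstoch hsym htr hN4) -/c -/r.
  have [hd0 hd1] := trQ_L0J_bounds hstoch hsym htr hN4 (n0 + k).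
  have hc : 0 <= c by apply: Rle_mult_inv_pos; [nra | apply: pow_lt; lra].
  have hrk : 0 <= r ^ (n0 + k) by apply: pow_le; lra.
  by have := Rmult_le_pos _ _ hc hrk; split; nra.
have [l [hl hlb]] := geometric_dominated_sum hr ht.
exists l; split => //.
by apply: discounted_tail_estimate => //; lra.
Qed.
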